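(* Let $n\ge 4$ and let $G$ be a graph having the maximum value of $cM_2$ among all connected graphs of order $n$. Then no two vertices of minimum degree in $G$ are adjacent.
   Context: All graphs are finite and simple. For a graph $G$ and a vertex $u$, $d_u(G)$ denotes the degree of $u$ in $G$. The complementary second Zagreb index of $G$ is $cM_2(G)=\sum_{uv\in E(G)}\left|(d_u(G))^2-(d_v(G))^2\right|$. *)

From mathcomp Require Import all_boot.
Set Implicit Arguments. Unset Strict Implicit. Unset Printing Implicit Defensive.

Definition simple_graph (n : nat) (e : rel 'I_n) : Prop :=
  irreflexive e /\ symmetric e.

Definition deg (n : nat) (e : rel 'I_n) (u : 'I_n) : nat := #|[set v | e u v]|.

Definition connected_graph (n : nat) (e : rel 'I_n) : Prop :=
  forall u v : 'I_n, connect e u v.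

Definition absdiff (a b : nat) : nat := (a - b) + (b - a).

(* complementary second Zagreb index: sum over edges uv (each unordered edge
   counted once, via u < v) of |d_u^2 - d_v^2| *)
Definition cM2 (n : nat) (e : rel 'I_n) : nat :=
  \sum_(u : 'I_n) \sum_(v : 'I_n | (u < v) && e u v)
     absdiff (deg e u ^ 2) (deg e v ^ 2).

Definition is_min_deg_vertex (n : nat) (e : rel 'I_n) (u : 'I_n) : Prop :=
  forall w : 'I_n, deg e u <= deg e w.

From mathcomp Require Import all_boot zify.
Set Implicit Arguments. Unset Strict Implicit. Unset Printing Implicit Defensive.

(* Suppose two vertices u, v of minimum degree d are adjacent; the edge uv
   contributes 0 to cM2.  If uv is not a bridge, delete it: d_u and d_v drop to
   d - 1, below every other degree, so no edge term decreases, while the term of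
   another edge at u strictly grows.  If uv is a bridge, let y maximise the
   degree over the component of v in G - uv minus v, and replace uv by uy: d_u
   is unchanged, d_v drops to d - 1 and d_y grows by one while staying above the
   degrees of its other neighbours, so again no term decreases, and the new
   edge uy contributes (d_y + 1)^2 - d^2 > 0.  Either way cM2 grows. *)

Lemma absdiff_sym a b : absdiff a b = absdiff b a.
Proof. by rewrite /absdiff addnC. Qed.

Definition moves_away (p p' q : nat) := (q <= p <= p') || (p' <= p <= q).

Lemma moves_away_refl p q : moves_away p p q.
Proof. by rewrite /moves_away leqnn !andbT leq_total. Qed.

Lemma leq_absdiff_sqr p q p' q' :
  moves_away p p' q -> moves_away q q' p ->
  absdiff (p ^ 2) (q ^ 2) <= absdiff (p' ^ 2) (q' ^ 2).
Proof. by rewrite /moves_away /absdiff => /orP[]/andP[? ?] /orP[]/andP[? ?]; nia. Qed.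

Lemma leq_ltn_sum (I : finType) (P : pred I) (F G : I -> nat) a :
  P a -> (forall i, P i -> F i <= G i) -> F a < G a ->
  \sum_(i | P i) F i < \sum_(i | P i) G i.
Proof.
move=> Pa leFG ltFGa; rewrite (bigD1 a) //= [ltnRHS](bigD1 a) //=.
by rewrite -addSn leq_add // leq_sum // => i /andP[/leFG].
Qed.

Definition edge_weight n (e : rel 'I_n) x y :=
  if e x y then absdiff (deg e x ^ 2) (deg e y ^ 2) else 0.

Lemma cM2E n (e : rel 'I_n) :
  cM2 e = \sum_(x : 'I_n) \sum_(y : 'I_n | x < y) edge_weight e x y.
Proof. by apply: eq_bigr => x _; rewrite big_mkcondr. Qed.

Lemma edge_weight_sym n (e : rel 'I_n) x y :
  symmetric e -> edge_weight e x y = edge_weight e y x.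
Proof. by move=> e_sym; rewrite /edge_weight e_sym absdiff_sym. Qed.

Lemma edge_weightxx n (e : rel 'I_n) x : edge_weight e x x = 0.
Proof. by rewrite /edge_weight /absdiff subnn if_same. Qed.

Lemma cM2_lt n (e e' : rel 'I_n) a b :
  symmetric e -> symmetric e' ->
  (forall x y, e x y -> ~~ e' x y -> deg e x = deg e y) ->
  (forall x y, e x y -> e' x y -> moves_away (deg e x) (deg e' x) (deg e y)) ->
  edge_weight e a b < edge_weight e' a b -> cM2 e < cM2 e'.
Proof.
move=> e_sym e'_sym lost kept.
have le_weight x y : edge_weight e x y <= edge_weight e' x y.
  rewrite /edge_weight; case: ifP => // exy; case: ifPn => [e'xy|/(lost _ _ exy)->].
    by apply: leq_absdiff_sqr; apply: kept; rewrite // (e_sym, e'_sym).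
  by rewrite /absdiff subnn.
wlog lt_ab : a b / a < b => [wlog_ab lt_weight|lt_weight].
  case: (ltngtP a b) => [|lt_ba|/val_inj eq_ab]; first by move/wlog_ab; apply.
    apply: (wlog_ab b a lt_ba).
    by rewrite edge_weight_sym // [edge_weight e' _ _]edge_weight_sym.
  by move: lt_weight; rewrite eq_ab !edge_weightxx.
rewrite !cM2E; apply: (leq_ltn_sum (a := a)) => // [x _|]; first exact: leq_sum.
exact: (leq_ltn_sum (a := b)).
Qed.

Definition edge_between n (a b : 'I_n) : rel 'I_n :=
  fun x y => ((x == a) && (y == b)) || ((x == b) && (y == a)).

Definition del_edge n (e : rel 'I_n) a b : rel 'I_n :=
  fun x y => e x y && ~~ edge_between a b x y.

Definition add_edge n (e : rel 'I_n) a b : rel 'I_n :=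
  fun x y => e x y || edge_between a b x y.

Section EdgeOperations.

Variables (n : nat) (e : rel 'I_n).
Hypothesis e_simple : simple_graph e.

Let e_irr : irreflexive e := e_simple.1.
Let e_sym : symmetric e := e_simple.2.

Lemma edge_between_sym (a b : 'I_n) : symmetric (edge_between a b).
Proof. by move=> x y; rewrite /edge_between orbC andbC [(y == b) && _]andbC. Qed.

Lemma del_edge_simple a b : simple_graph (del_edge e a b).
Proof. by split=> [x|x y]; rewrite /del_edge ?e_irr // e_sym edge_between_sym. Qed.

Lemma add_edge_simple a b : a != b -> simple_graph (add_edge e a b).
Proof.
move=> ab; split=> [x|x y]; last by rewrite /add_edge e_sym edge_between_sym.
rewrite /add_edge /edge_between e_irr /=.
by apply/negP => /orP[]/andP[/eqP-> /eqP ba]; rewrite ba eqxx in ab.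
Qed.

Lemma deg_del_edge a b x : e a b -> a != b ->
  deg (del_edge e a b) x = deg e x - ((x == a) || (x == b)).
Proof.
move=> eab ab; rewrite /deg /del_edge /edge_between.
have [->|xa] := eqVneq x a.
  rewrite (cardsD1 b [set t | e a t]) inE eab add1n subn1 /=.
  by apply: eq_card => t; rewrite !inE (negbTE ab) andFb orbF andbC.
have [->|xb] := eqVneq x b.
  rewrite (cardsD1 a [set t | e b t]) inE e_sym eab add1n subn1 /=.
  by apply: eq_card => t; rewrite !inE andbC.
by rewrite subn0; apply: eq_card => t; rewrite !inE andbT.
Qed.

Lemma deg_add_edge a b x : ~~ e a b -> a != b ->
  deg (add_edge e a b) x = deg e x + ((x == a) || (x == b)).
Proof.
move=> eab ab; rewrite /deg /add_edge /edge_between.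
have [->|xa] := eqVneq x a.
  rewrite (cardsD1 b [set t | e a t || _]) !inE eqxx orbT addn1 add1n /=.
  congr _.+1; apply: eq_card => t; rewrite !inE (negbTE ab) andFb orbF.
  by case: eqP => [->|]; rewrite ?(negbTE eab) ?orbF ?andbT.
have [->|xb] := eqVneq x b.
  rewrite (cardsD1 a [set t | e b t || _]) inE /= eqxx !orbT addn1 add1n.
  congr _.+1; apply: eq_card => t; rewrite !inE.
  by case: eqP => [->|_]; rewrite /= ?orbF // e_sym (negbTE eab).
by rewrite addn0; apply: eq_card => t; rewrite !inE orbF.
Qed.

End EdgeOperations.

Lemma adjacent_leaves_deg n (e : rel 'I_n) u v :
  2 < n -> simple_graph e -> connected_graph e -> e u v ->
  2 < deg e u + deg e v.
Proof.
move=> n_gt2 [_ e_sym] e_conn e_uv; rewrite ltnNge; apply/negP => small.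
(* Otherwise u and v are adjacent leaves, so {u, v} is a whole component. *)
have leaf x y : e x y -> deg e x + deg e y <= 2 -> forall t, e x t -> t = y.
  move=> exy sum_le t ext.
  have y_pos : 0 < deg e y by apply/card_gt0P; exists x; rewrite inE e_sym.
  have /card_le1_eqP x_leaf : deg e x <= 1 by lia.
  by apply: x_leaf; rewrite inE.
have uv_closed : closed e [set u; v].
  apply: (intro_closed (sym_connect_sym e_sym)) => x t ext.
  rewrite !inE => /orP[]/eqP xE; subst x.
    by rewrite (leaf _ _ e_uv small t ext) eqxx orbT.
  by rewrite (leaf v u _ _ t ext) ?eqxx // (e_sym, addnC).
have : #|[set: 'I_n]| <= #|[set u; v]|.
  apply/subset_leq_card/subsetP => x _.
  by rewrite -(closed_connect uv_closed (e_conn u x)) !inE eqxx.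
by rewrite cardsT card_ord cards2; case: (u != v); lia.
Qed.

Lemma connected_subrel n (e e' : rel 'I_n) :
  connected_graph e -> subrel e (connect e') -> connected_graph e'.
Proof. by move=> e_conn ee' x y; apply: connect_sub ee' _ _ (e_conn x y). Qed.

Lemma component_argmax n (e : rel 'I_n) (f : 'I_n -> nat) v z :
  e v z -> z != v ->
  exists2 y, connect e v y && (y != v) &
    forall t, connect e v t -> t != v -> f t <= f y.
Proof.
move=> e_vz zv; pose C := [pred t | connect e v t && (t != v)].
have z_in : C z by rewrite inE connect1.
by case: (arg_maxnP f z_in) => y y_in y_max; exists y => // t *; apply: y_max; apply/andP.
Qed.

Section AdjacentMinDegree.

Variables (n : nat) (e : rel 'I_n) (u v : 'I_n).
Hypotheses (n_gt2 : 2 < n) (e_simple : simple_graph e) (e_conn : connected_graph e).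
Hypotheses (u_min : is_min_deg_vertex e u) (v_min : is_min_deg_vertex e v).
Hypothesis e_uv : e u v.

Let e_irr : irreflexive e := e_simple.1.
Let e_sym : symmetric e := e_simple.2.

Local Notation d := (deg e u).
Local Notation e0 := (del_edge e u v).

Lemma deg_v : deg e v = d.
Proof. by apply/eqP; rewrite eqn_leq v_min u_min. Qed.

Lemma u_neq_v : u != v.
Proof. by apply: contraTneq e_uv => ->; rewrite e_irr. Qed.

Lemma min_deg_gt1 : 1 < d.
Proof. by have := adjacent_leaves_deg n_gt2 e_simple e_conn e_uv; rewrite deg_v; lia. Qed.

Let d_gt0 : 0 < d := ltnW min_deg_gt1.

Lemma e0_simple : simple_graph e0.
Proof. exact: del_edge_simple. Qed.

Lemma deg_e0 x : deg e0 x = deg e x - ((x == u) || (x == v)).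
Proof. exact: deg_del_edge e_simple _ _ _ e_uv u_neq_v. Qed.

Lemma e0_sub x y : e0 x y -> e x y.
Proof. by case/andP. Qed.

Lemma deg_lost_edge x y : e x y -> ~~ e0 x y -> deg e x = deg e y.
Proof. by rewrite /del_edge => -> /negbNE /orP[]/andP[/eqP-> /eqP->]; rewrite deg_v. Qed.

Lemma e0_moves_away x y : moves_away (deg e x) (deg e0 x) (deg e y).
Proof.
rewrite deg_e0; case: orP => [x_uv|_]; last by rewrite subn0 moves_away_refl.
have -> : deg e x = d by case: x_uv => /eqP->; rewrite ?deg_v.
by rewrite /moves_away leq_subr u_min orbT.
Qed.

Lemma connected_of_connect_uv (e' : rel 'I_n) :
  symmetric e' -> subrel e0 e' -> connect e' u v -> connected_graph e'.
Proof.
move=> e'_sym e0_e' c_uv; apply: connected_subrel e_conn _ => x y e_xy.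
case e0_xy: (e0 x y); first by rewrite connect1 ?e0_e'.
move: e0_xy; rewrite /del_edge e_xy => /negbFE /orP[]/andP[/eqP-> /eqP->] //.
by rewrite (sym_connect_sym e'_sym).
Qed.

Lemma del_edge_cM2_gt : connect e0 u v -> connected_graph e0 /\ cM2 e < cM2 e0.
Proof.
move=> c_uv; have [e0_irr e0_sym] := e0_simple.
split; first exact: connected_of_connect_uv.
have [w e0_uw] : exists w, e0 u w.
  have : 0 < deg e0 u by rewrite deg_e0 eqxx subn_gt0 min_deg_gt1.
  by case/card_gt0P => w; rewrite inE; exists w.
have w_uv : (w == u) || (w == v) = false.
  apply/norP; split; first by apply: contraTneq e0_uw => ->; rewrite e0_irr.
  by apply: contraTneq e0_uw => ->; rewrite /del_edge /edge_between !eqxx andbF.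
apply: (cM2_lt (a := u) (b := w) e_sym e0_sym deg_lost_edge) => [x y _ _|].
  exact: e0_moves_away.
rewrite /edge_weight e0_uw e0_sub // !deg_e0 eqxx w_uv subn0 subn1.
have := u_min w; have := min_deg_gt1; rewrite /absdiff; nia.
Qed.

Lemma exists_reattach_vertex : ~~ connect e0 u v ->
  exists y, [/\ connect e0 y v, y != u, y != v, ~~ e u y &
                forall t, e0 y t -> deg e t <= deg e y].
Proof.
move=> nc_uv; have [e0_irr e0_sym] := e0_simple.
have e0_connC := sym_connect_sym e0_sym.
have [z e0_vz] : exists z, e0 v z.
  have : 0 < deg e0 v by rewrite deg_e0 eqxx orbT deg_v subn_gt0 min_deg_gt1.
  by case/card_gt0P => z; rewrite inE; exists z.
have zv : z != v by apply: contraTneq e0_vz => ->; rewrite e0_irr.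
have [y /andP[c_vy yv] y_max] := component_argmax (deg e) e0_vz zv.
have yu : y != u by move: c_vy; apply: contraTneq => ->; rewrite e0_connC.
exists y; split=> //; first by rewrite e0_connC.
  apply: contra nc_uv => e_uy; rewrite e0_connC (connect_trans c_vy) // connect1 //.
  by rewrite /del_edge /edge_between e_sym e_uy (negbTE yu) (negbTE yv).
move=> t e0_yt; have [->|tv] := eqVneq t v; first by rewrite deg_v u_min.
by rewrite y_max // (connect_trans c_vy (connect1 e0_yt)).
Qed.

Lemma reattach_cM2_gt y :
  connect e0 y v -> y != u -> y != v -> ~~ e u y ->
  (forall t, e0 y t -> deg e t <= deg e y) ->
  exists e' : rel 'I_n, [/\ simple_graph e', connected_graph e' & cM2 e < cM2 e'].
Proof.
move=> c_yv yu yv n_uy y_max; pose e' := add_edge e0 u y.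
have e0_e' : subrel e0 e' by move=> x t; rewrite /e' /add_edge => ->.
have e'_uy : e' u y by rewrite /e' /add_edge /edge_between !eqxx orbT.
have e'_simple : simple_graph e'.
  by apply: add_edge_simple; [exact: e0_simple | rewrite eq_sym].
have [_ e'_sym] := e'_simple.
have deg_e' x : deg e' x = deg e0 x + ((x == u) || (x == y)).
  by rewrite (deg_add_edge e0_simple) // 1?eq_sym //; apply: contra n_uy; apply: e0_sub.
exists e'; split=> //.
  apply: (connected_of_connect_uv e'_sym e0_e').
  rewrite (connect_trans (connect1 e'_uy)) //.
  by apply: (connect_sub _ c_yv) => a b /e0_e'/connect1.
apply: (cM2_lt (a := u) (b := y) e_sym e'_sym) => [x t e_xt|x t e_xt e'_xt|].
- by move=> ne'_xt; exact: deg_lost_edge e_xt (contra (@e0_e' x t) ne'_xt).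
- have e0_xt : e0 x t.
    move: e'_xt; rewrite /e' /add_edge => /orP[//|uy_xt].
    suff : e u y by rewrite (negbTE n_uy).
    by case/orP: uy_xt e_xt => /andP[/eqP-> /eqP->]; rewrite // e_sym.
  have [->|xu] := eqVneq x u.
    by rewrite deg_e' deg_e0 eqxx /= subnK // moves_away_refl.
  have [xy|xy] := eqVneq x y; last first.
    by rewrite deg_e' (negbTE xu) (negbTE xy) addn0 e0_moves_away.
  subst x; rewrite deg_e' deg_e0 eqxx (negbTE yu) (negbTE yv) subn0 addn1.
  by rewrite /moves_away leqnSn andbT y_max.
rewrite /edge_weight (negbTE n_uy) /e' /add_edge /edge_between !eqxx orbT.
rewrite !deg_e' !deg_e0 !eqxx (negbTE yu) (negbTE yv) /= subnK // subn0 addn1.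
by have := u_min y; rewrite /absdiff; nia.
Qed.

Lemma exists_graph_cM2_gt :
  exists e' : rel 'I_n, [/\ simple_graph e', connected_graph e' & cM2 e < cM2 e'].
Proof.
have [c_uv|/exists_reattach_vertex[y [c_yv yu yv n_uy y_max]]] := boolP (connect e0 u v).
  by have [e0_conn lt_e0] := del_edge_cM2_gt c_uv; exists e0; split=> //; apply: e0_simple.
exact: reattach_cM2_gt c_yv yu yv n_uy y_max.
Qed.

End AdjacentMinDegree.

Theorem proposition2 (n : nat) (e : rel 'I_n) :
  4 <= n ->
  simple_graph e -> connected_graph e ->
  (forall e' : rel 'I_n, simple_graph e' -> connected_graph e' ->
     cM2 e' <= cM2 e) ->
  forall u v : 'I_n, is_min_deg_vertex e u -> is_min_deg_vertex e v ->
    ~~ e u v.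
Proof.
move=> n_ge4 e_simple e_conn e_max u v u_min v_min; apply/negP => e_uv.
have [e' [e'_simple e'_conn lt_e']] :=
  exists_graph_cM2_gt (ltnW n_ge4) e_simple e_conn u_min v_min e_uv.
by have := e_max e' e'_simple e'_conn; rewrite leqNgt lt_e'.
Qed.
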